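(* Let $a,n\in\mathbb{N}$, let $k_1,\ldots,k_n\in\mathbb{N}$, let $f_1,\ldots,f_n$, $g_1,\ldots,g_n$, $h_1,\ldots,h_n$ be arbitrary arithmetic functions, and let $\omega$ be a completely multiplicative function. Then $$U_{\omega}^{(a)}(k_1,\ldots,k_n)=\sum_{d_1|k_1,\ldots,d_n|k_n}\omega(M)^a\Bigl(\prod_{i=1}^n f_i(d_i)\,g_i\Bigl(\frac{k_i}{d_i}\Bigr)\Bigr)\sum_{\ell=1}^{L^a}\omega(\ell)\prod_{i=1}^n h_i\Bigl(\Bigl(\frac{M}{d_i}\Bigr)^a\ell\Bigr),$$ where in each summand $M=\operatorname{lcm}(d_1,\ldots,d_n)$ and $L=K/M$. If in addition $h_1,\ldots,h_n$ are completely multiplicative, then $$U_{\omega}^{(a)}(k_1,\ldots,k_n)=\sum_{d_1|k_1,\ldots,d_n|k_n}\omega(M)^a\Bigl(\prod_{i=1}^n f_i(d_i)\,g_i\Bigl(\frac{k_i}{d_i}\Bigr)h_i\Bigl(\frac{M}{d_i}\Bigr)^a\Bigr)\sum_{\ell=1}^{L^a}\omega(\ell)\prod_{i=1}^n h_i(\ell).$$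
   Context: An arithmetic function is a map $\mathbb{N}\to\mathbb{C}$. A function $\omega$ is completely multiplicative if $\omega(1)=1$ and $\omega(mn)=\omega(m)\omega(n)$ for all $m,n\in\mathbb{N}$. For $a\in\mathbb{N}$ and arithmetic functions $f,g,h$, the generalized Anderson–Apostol sum is $s^{(a)}_{f,g,h}(k,j)=\sum_{d|k,\ d^a|j} f(d)\,g(k/d)\,h(j/d^a)$ for $k,j\in\mathbb{N}$. Given $k_1,\ldots,k_n\in\mathbb{N}$, put $K=\operatorname{lcm}(k_1,\ldots,k_n)$ and $U_{\omega}^{(a)}(k_1,\ldots,k_n)=\sum_{j=1}^{K^a}\omega(j)\prod_{i=1}^n s^{(a)}_{f_i,g_i,h_i}(k_i,j)$. *)

(* arithmetic functions are maps nat -> algC (values at 0 irrelevant). *)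
From HB Require Import structures.
From mathcomp Require Import all_boot all_order all_algebra all_field.
Set Implicit Arguments. Unset Strict Implicit. Unset Printing Implicit Defensive.
Import Order.TTheory GRing.Theory Num.Theory.
Local Open Scope ring_scope.

Definition compl_mult (w : nat -> algC) : Prop :=
  w 1%N = 1 /\ forall m n : nat, (0 < m)%N -> (0 < n)%N -> w (m * n)%N = w m * w n.

Definition AAsum (a : nat) (f g h : nat -> algC) (k j : nat) : algC :=
  \sum_(d <- divisors k | (d ^ a %| j)%N) f d * g (k %/ d)%N * h (j %/ d ^ a)%N.

Definition lcm_fam (n : nat) (k : 'I_n -> nat) : nat := \big[lcmn/1%N]_(i < n) k i.

Definition Usum (a n : nat) (f g h : 'I_n -> nat -> algC) (w : nat -> algC)
    (k : 'I_n -> nat) : algC :=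
  \sum_(1 <= j < (lcm_fam k) ^ a + 1)
     w j * \prod_(i < n) AAsum a (f i) (g i) (h i) (k i) j.

From HB Require Import structures.
From mathcomp Require Import all_boot all_order all_algebra all_field.
From mathcomp Require Import zify ring.

Set Implicit Arguments.
Unset Strict Implicit.
Unset Printing Implicit Defensive.
Import Order.TTheory GRing.Theory Num.Theory.

(* Expanding every Anderson--Apostol sum over its divisors and multiplying out
   turns the product into a sum over tuples (d_1, ..., d_n) with d_i | k_i, whose
   term for j survives exactly when every d_i^a divides j, i.e. when
   lcm(d_i^a) = M^a divides j, where M = lcm(d_1, ..., d_n).  After exchanging the
   sums over j and over the tuples, the surviving j in [1, K^a] are the j = M^a l
   with 1 <= l <= (K/M)^a; complete multiplicativity of omega gives
   omega(M^a l) = omega(M)^a omega(l), and (M^a l)/d_i^a = (M/d_i)^a l.  When the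
   h_i are completely multiplicative too, h_i((M/d_i)^a l) splits off h_i(M/d_i)^a. *)

Lemma gcdn_expn a x y : 0 < x -> gcdn (x ^ a) (y ^ a) = gcdn x y ^ a.
Proof.
move=> x_gt0; set g := gcdn x y.
have g_gt0 : 0 < g by rewrite gcdn_gt0 x_gt0.
have [x' Dx] : exists x', x = x' * g by exists (x %/ g); rewrite divnK ?dvdn_gcdl.
have [y' Dy] : exists y', y = y' * g by exists (y %/ g); rewrite divnK ?dvdn_gcdr.
have co_xy : coprime x' y'.
  by rewrite /coprime -(eqn_pmul2r g_gt0) mul1n muln_gcdl -Dx -Dy.
rewrite Dx Dy !expnMn -muln_gcdl.
by rewrite (eqP (coprimeXr _ (coprimeXl _ co_xy))) mul1n.
Qed.

Lemma lcmn_expn a x y : 0 < a -> lcmn (x ^ a) (y ^ a) = lcmn x y ^ a.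
Proof.
move=> a_gt0; have [-> | x_gt0] := posnP x; first by rewrite exp0n // !lcm0n exp0n.
have [-> | y_gt0] := posnP y; first by rewrite exp0n // !lcmn0 exp0n.
have g_gt0 : 0 < gcdn x y ^ a by rewrite expn_gt0 gcdn_gt0 x_gt0.
apply/eqP; rewrite -(eqn_pmul2r g_gt0) -[X in _ * X == _]gcdn_expn // muln_lcm_gcd.
by rewrite -!expnMn muln_lcm_gcd.
Qed.

Lemma lcm_fam_expn a n (d : 'I_n -> nat) :
  0 < a -> lcm_fam d ^ a = lcm_fam (fun i => d i ^ a).
Proof.
move=> a_gt0; apply: (big_morph (expn^~ a)); last exact: exp1n.
by move=> x y; rewrite lcmn_expn.
Qed.

Lemma dvdn_lcm_fam n (k : 'I_n -> nat) i : k i %| lcm_fam k.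
Proof. exact: biglcmn_sup. Qed.

Lemma lcm_fam_dvdP n (k : 'I_n -> nat) m :
  reflect (forall i, k i %| m) (lcm_fam k %| m).
Proof.
by apply: (iffP (dvdn_biglcmP _ _ _)) => dvd_km i => [|_]; apply: dvd_km.
Qed.

Lemma lcm_fam_gt0 n (k : 'I_n -> nat) : (forall i, 0 < k i) -> 0 < lcm_fam k.
Proof.
by move=> k_gt0; rewrite /lcm_fam; elim/big_ind: _ => // x y; rewrite lcmn_gt0 => -> ->.
Qed.

Lemma filter_dvdn_index_iota m q : 0 < m ->
  [seq j <- index_iota 1 (m * q + 1) | m %| j] = [seq m * l | l <- index_iota 1 (q + 1)].
Proof.
move=> m_gt0; apply: (irr_sorted_eq ltn_trans ltnn).
- exact/sorted_filter/iota_ltn_sorted/ltn_trans.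
- by apply/homo_sorted/iota_ltn_sorted => x y; rewrite ltn_pmul2l.
move=> j; rewrite mem_filter mem_index_iota; apply/andP/mapP => [[/dvdnP[l ->]] | [l]].
  by rewrite mulnC => rng; exists l; rewrite ?mem_index_iota; nia.
by rewrite mem_index_iota => rng ->; rewrite dvdn_mulr //; nia.
Qed.

Lemma divn_expnMl a x d l : 0 < d -> d %| x ->
  (x ^ a * l) %/ d ^ a = (x %/ d) ^ a * l.
Proof. by move=> d_gt0 /divnK {1}<-; rewrite expnMn mulnAC mulnK // expn_gt0 d_gt0. Qed.

Lemma divisors_filter_iota k K : 0 < k -> k <= K ->
  divisors k = [seq x <- index_iota 0 K.+1 | x %| k].
Proof.
move=> k_gt0 le_kK; apply: (irr_sorted_eq ltn_trans ltnn).
- exact: sorted_divisors_ltn.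
- exact/sorted_filter/iota_ltn_sorted/ltn_trans.
move=> x; rewrite -dvdn_divisors // mem_filter mem_index_iota andbC.
by case: (boolP (x %| k)) => [/(dvdn_leq k_gt0) le_xk|]; rewrite ?andbF // andbT; lia.
Qed.

Local Open Scope ring_scope.

Lemma big_nat_dvdn (R : nmodType) (F : nat -> R) m q : (0 < m)%N ->
  \sum_(1 <= j < m * q + 1 | (m %| j)%N) F j = \sum_(1 <= l < q + 1) F (m * l)%N.
Proof. by move=> m_gt0; rewrite -big_filter filter_dvdn_index_iota // big_map. Qed.

Lemma compl_multM (w : nat -> algC) m n :
  compl_mult w -> (0 < m)%N -> (0 < n)%N -> w (m * n)%N = w m * w n.
Proof. by case=> _ wM; apply: wM. Qed.

Lemma compl_mult_expn (w : nat -> algC) a x :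
  compl_mult w -> (0 < x)%N -> w (x ^ a)%N = w x ^+ a.
Proof.
move=> w_cm x_gt0; elim: a => [|a IHa]; first by rewrite expn0 expr0; case: w_cm.
by rewrite expnS compl_multM ?expn_gt0 ?x_gt0 // IHa exprS.
Qed.

Lemma AAsum_ord a (f g h : nat -> algC) k j K : (0 < k)%N -> (k <= K)%N ->
  AAsum a f g h k j = \sum_(x < K.+1 | (x %| k)%N && (x ^ a %| j)%N)
                        f x * g (k %/ x)%N * h (j %/ x ^ a)%N.
Proof.
move=> k_gt0 le_kK; rewrite /AAsum (divisors_filter_iota k_gt0 le_kK).
by rewrite big_filter_cond big_mkord.
Qed.

Lemma prod_AAsum a n (k : 'I_n -> nat) (f g h : 'I_n -> nat -> algC) K j :
  (0 < a)%N -> (forall i, 0 < k i)%N -> (forall i, k i <= K)%N ->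
  \prod_(i < n) AAsum a (f i) (g i) (h i) (k i) j =
  \sum_(d : {ffun 'I_n -> 'I_K.+1} | [forall i, (d i %| k i)%N] &&
                                     (lcm_fam (fun i => nat_of_ord (d i)) ^ a %| j)%N)
     \prod_(i < n) (f i (d i) * g i (k i %/ d i)%N * h i (j %/ d i ^ a)%N).
Proof.
move=> a_gt0 k_gt0 le_kK.
rewrite (eq_bigr _ (fun i _ => AAsum_ord a (f i) (g i) (h i) j (k_gt0 i) (le_kK i))).
rewrite bigA_distr_big_dep; apply: eq_bigl => d; rewrite lcm_fam_expn //.
apply/familyP/andP => [d_ok | [/forallP dvd_dk /lcm_fam_dvdP dvd_j] i].
  by split; [apply/forallP | apply/lcm_fam_dvdP] => i; case/andP: (d_ok i).
by rewrite unfold_in dvd_dk dvd_j.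
Qed.

Lemma Usum_expand (a n : nat) (k : 'I_n -> nat) (f g h : 'I_n -> nat -> algC)
    (w : nat -> algC) :
  (0 < a)%N -> (forall i, 0 < k i)%N -> compl_mult w ->
  Usum a f g h w k =
     \sum_(d : {ffun 'I_n -> 'I_(lcm_fam k).+1} | [forall i, (d i %| k i)%N])
       w (lcm_fam (fun i => nat_of_ord (d i))) ^+ a *
       (\prod_(i < n) (f i (d i) * g i (k i %/ d i)%N)) *
       \sum_(1 <= l < (lcm_fam k %/ lcm_fam (fun i => nat_of_ord (d i))) ^ a + 1)
          w l * \prod_(i < n)
                  h i ((lcm_fam (fun i => nat_of_ord (d i)) %/ d i) ^ a * l)%N.
Proof.
move=> a_gt0 k_gt0 w_cm; set K := lcm_fam k.
have le_kK i : (k i <= K)%N by rewrite dvdn_leq ?dvdn_lcm_fam // lcm_fam_gt0.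
rewrite /Usum; under eq_bigr do rewrite (prod_AAsum f g h _ a_gt0 k_gt0 le_kK) big_distrr.
rewrite (exchange_big_dep (fun d : {ffun 'I_n -> 'I_K.+1} => [forall i, d i %| k i]%N)).
  2: by move=> j d _ /andP[].
apply: eq_bigr => d dvd_dk_all; have /forallP dvd_dk := dvd_dk_all.
set M := lcm_fam (fun i => nat_of_ord (d i)).
have d_gt0 i : (0 < d i)%N := dvdn_gt0 (k_gt0 i) (dvd_dk i).
have M_gt0 : (0 < M)%N by apply: lcm_fam_gt0.
have dvd_dM i : (d i %| M)%N := dvdn_lcm_fam (fun i => nat_of_ord (d i)) i.
have dvd_MK : (M %| K)%N.
  by apply/lcm_fam_dvdP => i; exact: dvdn_trans (dvd_dk i) (dvdn_lcm_fam k i).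
have -> : (K ^ a = M ^ a * (K %/ M) ^ a)%N by rewrite -expnMn mulnC divnK.
rewrite (eq_bigl (fun j => M ^ a %| j)%N) => [|j]; last by rewrite dvd_dk_all.
rewrite big_nat_dvdn ?expn_gt0 ?M_gt0 // big_distrr.
apply: eq_big_nat => l /andP[l_gt0 _].
rewrite compl_multM ?expn_gt0 ?M_gt0 // compl_mult_expn //.
under eq_bigr do rewrite divn_expnMl ?d_gt0 ?dvd_dM //.
by rewrite big_split /=; ring.
Qed.

Lemma prod_compl_mult_expnM n (h : 'I_n -> nat -> algC) (q : 'I_n -> nat) a l :
  (forall i, compl_mult (h i)) -> (forall i, 0 < q i)%N -> (0 < l)%N ->
  \prod_(i < n) h i (q i ^ a * l)%N = \prod_(i < n) h i (q i) ^+ a * \prod_(i < n) h i l.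
Proof.
move=> h_cm q_gt0 l_gt0; rewrite -big_split; apply: eq_bigr => i _.
by rewrite compl_multM ?expn_gt0 ?q_gt0 // compl_mult_expn.
Qed.

Theorem theorem1 (a n : nat) (k : 'I_n -> nat) (f g h : 'I_n -> nat -> algC)
    (w : nat -> algC) :
  (0 < a)%N -> (0 < n)%N -> (forall i, 0 < k i)%N -> compl_mult w ->
  (Usum a f g h w k =
     \sum_(d : {ffun 'I_n -> 'I_(lcm_fam k).+1} | [forall i, (d i %| k i)%N])
       w (lcm_fam (fun i => nat_of_ord (d i))) ^+ a *
       (\prod_(i < n) (f i (d i) * g i (k i %/ d i)%N)) *
       \sum_(1 <= l < (lcm_fam k %/ lcm_fam (fun i => nat_of_ord (d i))) ^ a + 1)
          w l * \prod_(i < n)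
                  h i ((lcm_fam (fun i => nat_of_ord (d i)) %/ d i) ^ a * l)%N)
  /\
  ((forall i, compl_mult (h i)) ->
   Usum a f g h w k =
     \sum_(d : {ffun 'I_n -> 'I_(lcm_fam k).+1} | [forall i, (d i %| k i)%N])
       w (lcm_fam (fun i => nat_of_ord (d i))) ^+ a *
       (\prod_(i < n) (f i (d i) * g i (k i %/ d i)%N *
                       h i (lcm_fam (fun i => nat_of_ord (d i)) %/ d i)%N ^+ a)) *
       \sum_(1 <= l < (lcm_fam k %/ lcm_fam (fun i => nat_of_ord (d i))) ^ a + 1)
          w l * \prod_(i < n) h i l).
Proof.
move=> a_gt0 _ k_gt0 w_cm; split; first exact: Usum_expand.
move=> h_cm; rewrite Usum_expand //; apply: eq_bigr => d /forallP dvd_dk.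
set M := lcm_fam (fun i => nat_of_ord (d i)).
have d_gt0 i : (0 < d i)%N := dvdn_gt0 (k_gt0 i) (dvd_dk i).
have q_gt0 i : (0 < M %/ d i)%N.
  rewrite divn_gt0 // dvdn_leq ?lcm_fam_gt0 //.
  exact: dvdn_lcm_fam (fun j => nat_of_ord (d j)) i.
under eq_big_nat => l /andP[l_gt0 _] do
  rewrite (prod_compl_mult_expnM _ h_cm q_gt0 l_gt0) mulrCA.
by rewrite -big_distrr [in RHS]big_split /= !mulrA.
Qed.
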